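(* $\widetilde{\mathbb{R}}$ and $\widetilde{\mathbb{R}}_{sm}$ are reduced normal $f$-rings.
   Context: Let $I=(0,1]$. $\widetilde{\mathbb{R}}=\mathcal{E}_M/\mathcal{N}$ with $\mathcal{E}_M=\{(r_\varepsilon)\in\mathbb{R}^I:\exists N: |r_\varepsilon|=O(\varepsilon^{-N})\}$, $\mathcal{N}=\{(r_\varepsilon)\in\mathbb{R}^I:\forall m: |r_\varepsilon|=O(\varepsilon^m)\}$; $\widetilde{\mathbb{R}}_{sm}$ (resp. $\widetilde{\mathbb{R}}_{co}$) is defined in the same way using only nets with $\varepsilon\mapsto r_\varepsilon$ smooth (resp. continuous), and the natural map $\tau_{sm}:\widetilde{\mathbb{R}}_{sm}\to\widetilde{\mathbb{R}}_{co}$ is a ring isomorphism. Order: $r\le s$ iff there are representatives with $r_\varepsilon\le s_\varepsilon$ for all $\varepsilon$; lattice operations are given by componentwise $\max$, $\min$ of representatives (in $\widetilde{\mathbb{R}}_{sm}$ transported via $\tau_{sm}^{-1}$ from $\widetilde{\mathbb{R}}_{co}$). A ring is reduced if it has no nonzero nilpotents. An $f$-ring is a commutative ring with 1 which is a lattice-ordered ring such that $(r\wedge s)t=rt\wedge st$ whenever $t\ge0$. A reduced commutative $f$-ring $R$ with 1 is normal if for all $r,s\in R$ with $rs=0$ one has $R=\mathrm{Ann}(r)+\mathrm{Ann}(s)$, where $\mathrm{Ann}(r)=\{t\in R: rt=0\}$. *)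

From Stdlib Require Import Reals.
From Coquelicot Require Import Coquelicot.
Open Scope R_scope.

(* Nets indexed by I = (0,1] are represented as functions R -> R; only their
   values on I matter (all notions below quantify over I only). *)
Definition net := R -> R.
Definition inI (e : R) : Prop := 0 < e /\ e <= 1.

Definition moderate (r : net) : Prop :=
  exists (N : nat) (C eta : R), inI eta /\
    forall e, 0 < e -> e <= eta -> Rabs (r e) <= C / (e ^ N).

Definition negligible (r : net) : Prop :=
  forall m : nat, exists (C eta : R), inI eta /\
    forall e, 0 < e -> e <= eta -> Rabs (r e) <= C * (e ^ m).

Definition geq (r s : net) : Prop := negligible (fun e => r e - s e).

Definition cont_net (r : net) : Prop :=
  forall e, inI e -> forall eps, 0 < eps -> exists d, 0 < d /\
    forall x, inI x -> Rabs (x - e) < d -> Rabs (r x - r e) < eps.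

(* smoothness of eps |-> r_eps on (0,1] (C^infty up to the endpoint 1):
   restriction to (0,1] of a C^infty function on (0,+oo). *)
Definition smooth_net (r : net) : Prop :=
  exists g : R -> R, (forall e, inI e -> g e = r e) /\
    forall (n : nat) (x : R), 0 < x -> ex_derive (Derive_n g n) x.

Definition nadd (r s : net) : net := fun e => r e + s e.
Definition nmul (r s : net) : net := fun e => r e * s e.
Definition nopp (r : net) : net := fun e => - r e.
Definition nconst (c : R) : net := fun _ => c.
Definition nmin (r s : net) : net := fun e => Rmin (r e) (s e).
Definition nmax (r s : net) : net := fun e => Rmax (r e) (s e).
Fixpoint npow (r : net) (n : nat) : net :=
  match n with O => nconst 1 | S k => nmul r (npow r k) end.

(* Order: r <= s iff there are representatives (drawn from the class Q of
   admissible representative nets) r' ~ r, s' ~ s with r'_eps <= s'_eps for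
   all eps in I.  For R~ : Q = all nets; for R~_sm the order is transported
   from R~_co via tau_sm, so Q = continuous nets. *)
Definition nle (Q : net -> Prop) (r s : net) : Prop :=
  exists r' s', Q r' /\ Q s' /\ geq r r' /\ geq s s' /\
    forall e, inI e -> r' e <= s' e.

(* A generalized-number ring given as a setoid: carrier K (representing nets),
   equality geq, pointwise operations, order nle Q, and meet/join of the
   classes of r, s = the class (in K) of the componentwise min/max. *)
Definition reduced_normal_fring (K Q : net -> Prop) : Prop :=
  K (nconst 0) /\ K (nconst 1) /\
  (forall r s, K r -> K s -> K (nadd r s)) /\
  (forall r s, K r -> K s -> K (nmul r s)) /\
  (forall r, K r -> K (nopp r)) /\
  (forall r, K r -> geq r r) /\
  (forall r s, K r -> K s -> geq r s -> geq s r) /\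
  (forall r s t, K r -> K s -> K t -> geq r s -> geq s t -> geq r t) /\
  (forall r r' s s', K r -> K r' -> K s -> K s' -> geq r r' -> geq s s' ->
      geq (nadd r s) (nadd r' s') /\ geq (nmul r s) (nmul r' s')) /\
  (forall r r', K r -> K r' -> geq r r' -> geq (nopp r) (nopp r')) /\
  (forall r s t, K r -> K s -> K t ->
      geq (nadd r (nadd s t)) (nadd (nadd r s) t) /\
      geq (nadd r s) (nadd s r) /\
      geq (nadd r (nconst 0)) r /\
      geq (nadd r (nopp r)) (nconst 0) /\
      geq (nmul r (nmul s t)) (nmul (nmul r s) t) /\
      geq (nmul r s) (nmul s r) /\
      geq (nmul r (nconst 1)) r /\
      geq (nmul r (nadd s t)) (nadd (nmul r s) (nmul r t))) /\
  (forall r, K r -> nle Q r r) /\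
  (forall r s t, K r -> K s -> K t -> nle Q r s -> nle Q s t -> nle Q r t) /\
  (forall r s, K r -> K s -> nle Q r s -> nle Q s r -> geq r s) /\
  (forall r r' s s', K r -> K r' -> K s -> K s' -> geq r r' -> geq s s' ->
      nle Q r s -> nle Q r' s') /\
  (forall r s t, K r -> K s -> K t -> nle Q r s -> nle Q (nadd r t) (nadd s t)) /\
  (forall r s, K r -> K s -> nle Q (nconst 0) r -> nle Q (nconst 0) s ->
      nle Q (nconst 0) (nmul r s)) /\
  (forall r s, K r -> K s -> exists m, K m /\ geq m (nmin r s)) /\
  (forall r s, K r -> K s -> exists m, K m /\ geq m (nmax r s)) /\
  (forall r s m, K r -> K s -> K m -> geq m (nmin r s) ->
      nle Q m r /\ nle Q m s /\
      forall z, K z -> nle Q z r -> nle Q z s -> nle Q z m) /\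
  (forall r s m, K r -> K s -> K m -> geq m (nmax r s) ->
      nle Q r m /\ nle Q s m /\
      forall z, K z -> nle Q r z -> nle Q s z -> nle Q m z) /\
  (* f-ring: (r /\ s) t = rt /\ st for t >= 0 *)
  (forall r s t m1 m2, K r -> K s -> K t -> K m1 -> K m2 ->
      nle Q (nconst 0) t ->
      geq m1 (nmin r s) -> geq m2 (nmin (nmul r t) (nmul s t)) ->
      geq (nmul m1 t) m2) /\
  (forall r (n : nat), K r -> geq (npow r (S n)) (nconst 0) -> geq r (nconst 0)) /\
  (* normal: rs = 0 -> R = Ann(r) + Ann(s) *)
  (forall r s, K r -> K s -> geq (nmul r s) (nconst 0) ->
      forall x, K x -> exists a b, K a /\ K b /\
        geq (nmul r a) (nconst 0) /\ geq (nmul s b) (nconst 0) /\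
        geq x (nadd a b)).

Definition K_full (r : net) : Prop := moderate r.
Definition K_sm (r : net) : Prop := smooth_net r /\ moderate r.
Definition Q_all (r : net) : Prop := True.

From Stdlib Require Import Reals Lra Lia.
From Coquelicot Require Import Coquelicot.
Open Scope R_scope.

(* Work with an arbitrary class [K] of moderate nets closed under the ring operations, ordered
   through admissible representatives [Q]: every ring, order, lattice and f-ring identity then
   holds pointwise up to negligible corrections, and reducedness holds because a net whose power
   is negligible is itself negligible. What remains is to keep meets, joins and the
   decompositions witnessing normality inside [K]; for smooth nets this is done by regularizing
   with the flat net exp (-1/e), which is smooth on (0, +oo) and negligible. *)

Lemma inI_Rmin a b : inI a -> inI b -> inI (Rmin a b).
Proof. unfold inI, Rmin; destruct (Rle_dec a b); lra. Qed.

Lemma inI_le e eta : inI eta -> 0 < e -> e <= eta -> inI e.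
Proof. unfold inI; lra. Qed.

Lemma Rmin_le_l e a b : e <= Rmin a b -> e <= a.
Proof. unfold Rmin; destruct (Rle_dec a b); lra. Qed.

Lemma Rmin_le_r e a b : e <= Rmin a b -> e <= b.
Proof. unfold Rmin; destruct (Rle_dec a b); lra. Qed.

Lemma moderateP r : moderate r <-> exists N C eta, inI eta /\
  forall e, 0 < e -> e <= eta -> Rabs (r e) * e ^ N <= C.
Proof.
  split; intros (N & C & eta & Heta & H); exists N, C, eta; split; auto;
    intros e He Hle; specialize (H e He Hle);
    assert (Hp : 0 < e ^ N) by (apply pow_lt; lra).
  - apply (Rmult_le_compat_r (e ^ N)) in H; [|lra].
    now replace (C / e ^ N * e ^ N) with C in H by (field; lra).
  - apply (Rmult_le_compat_r (/ e ^ N)) in H; [|apply Rlt_le, Rinv_0_lt_compat; lra].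
    now replace (Rabs (r e) * e ^ N * / e ^ N) with (Rabs (r e)) in H by (field; lra).
Qed.

Lemma negligible_le f g : negligible g ->
  (forall e, inI e -> Rabs (f e) <= Rabs (g e)) -> negligible f.
Proof.
  intros Hg H m. destruct (Hg m) as (C & eta & Heta & B). exists C, eta; split; auto.
  intros e He Hle. apply Rle_trans with (Rabs (g e)); auto.
  apply H, (inI_le _ eta); auto.
Qed.

Lemma negligible_ext f g : negligible g -> (forall e, inI e -> f e = g e) -> negligible f.
Proof. intros Hg H. apply (negligible_le _ g Hg). intros e He. rewrite H; auto; lra. Qed.

Lemma negligible_Rabs f : negligible f -> negligible (fun e => Rabs (f e)).
Proof. intros H. apply (negligible_le _ f H). intros; rewrite Rabs_Rabsolu; lra. Qed.

Lemma negligible_opp f : negligible f -> negligible (fun e => - f e).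
Proof. intros H. apply (negligible_le _ f H). intros; rewrite Rabs_Ropp; lra. Qed.

Lemma negligible_add f g : negligible f -> negligible g -> negligible (fun e => f e + g e).
Proof.
  intros Hf Hg m. destruct (Hf m) as (C1 & e1 & He1 & B1), (Hg m) as (C2 & e2 & He2 & B2).
  exists (C1 + C2), (Rmin e1 e2); split; [now apply inI_Rmin|].
  intros e He Hle. specialize (B1 e He (Rmin_le_l _ _ _ Hle)).
  specialize (B2 e He (Rmin_le_r _ _ _ Hle)).
  apply Rle_trans with (Rabs (f e) + Rabs (g e)); [apply Rabs_triang|lra].
Qed.

Lemma negligible_mul_moderate f g : negligible f -> moderate g ->
  negligible (fun e => f e * g e).
Proof.
  intros Hf Hg m. apply moderateP in Hg as (N & Cg & eg & Heg & Bg).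
  destruct (Hf (m + N)%nat) as (C & ef & Hef & Bf).
  exists (C * Cg), (Rmin ef eg); split; [now apply inI_Rmin|].
  intros e He Hle. specialize (Bf e He (Rmin_le_l _ _ _ Hle)).
  specialize (Bg e He (Rmin_le_r _ _ _ Hle)). rewrite pow_add in Bf.
  assert (HN : 0 < e ^ N) by (apply pow_lt; lra).
  assert (Hm : 0 < e ^ m) by (apply pow_lt; lra).
  pose proof (Rabs_pos (f e)). pose proof (Rabs_pos (g e)).
  rewrite Rabs_mult. apply (Rmult_le_reg_r (e ^ N)); auto.
  apply Rle_trans with (C * (e ^ m * e ^ N) * Cg); [|nra].
  rewrite Rmult_assoc. apply Rmult_le_compat; auto. nra.
Qed.

Lemma negligible_zero : negligible (fun _ => 0).
Proof.
  intros m. exists 0, 1. split; [unfold inI; lra|]. intros. rewrite Rabs_R0. lra.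
Qed.

Lemma moderate_le f g : moderate g ->
  (forall e, inI e -> Rabs (f e) <= Rabs (g e)) -> moderate f.
Proof.
  intros Hg H. apply moderateP in Hg as (N & C & eta & Heta & B). apply moderateP.
  exists N, C, eta. split; auto. intros e He Hle.
  apply Rle_trans with (Rabs (g e) * e ^ N); auto.
  apply Rmult_le_compat_r; [apply pow_le; lra|]. apply H, (inI_le _ eta); auto.
Qed.

Lemma moderate_Rabs f : moderate f -> moderate (fun e => Rabs (f e)).
Proof. intros H. apply (moderate_le _ f H). intros; rewrite Rabs_Rabsolu; lra. Qed.

Lemma moderate_const c : moderate (fun _ => c).
Proof.
  apply moderateP. exists 0%nat, (Rabs c), 1. split; [unfold inI; lra|]. intros; simpl; lra.
Qed.

Lemma moderate_of_negligible f : negligible f -> moderate f.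
Proof.
  intros H. destruct (H 0%nat) as (C & eta & Heta & B). apply moderateP.
  exists 0%nat, C, eta. split; auto. intros e He Hle. specialize (B e He Hle). simpl in *. lra.
Qed.

Lemma moderate_add f g : moderate f -> moderate g -> moderate (fun e => f e + g e).
Proof.
  intros Hf Hg. apply moderateP in Hf as (N1 & C1 & e1 & He1 & B1).
  apply moderateP in Hg as (N2 & C2 & e2 & He2 & B2). apply moderateP.
  exists (N1 + N2)%nat, (C1 + C2), (Rmin e1 e2). split; [now apply inI_Rmin|].
  intros e He Hle. specialize (B1 e He (Rmin_le_l _ _ _ Hle)).
  specialize (B2 e He (Rmin_le_r _ _ _ Hle)).
  destruct (inI_le e _ (inI_Rmin _ _ He1 He2) He Hle) as [_ He1'].
  assert (P1 : 0 < e ^ N1) by (apply pow_lt; lra).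
  assert (P2 : 0 < e ^ N2) by (apply pow_lt; lra).
  assert (Q1 : e ^ N1 <= 1) by (rewrite <- (pow1 N1); apply pow_incr; lra).
  assert (Q2 : e ^ N2 <= 1) by (rewrite <- (pow1 N2); apply pow_incr; lra).
  pose proof (Rabs_triang (f e) (g e)). pose proof (Rabs_pos (f e)). pose proof (Rabs_pos (g e)).
  assert (X1 : Rabs (f e) * e ^ N1 * e ^ N2 <= C1).
  { apply Rle_trans with (Rabs (f e) * e ^ N1); auto.
    rewrite <- (Rmult_1_r (Rabs (f e) * e ^ N1)) at 2. apply Rmult_le_compat_l; nra. }
  assert (X2 : Rabs (g e) * e ^ N2 * e ^ N1 <= C2).
  { apply Rle_trans with (Rabs (g e) * e ^ N2); auto.
    rewrite <- (Rmult_1_r (Rabs (g e) * e ^ N2)) at 2. apply Rmult_le_compat_l; nra. }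
  rewrite pow_add.
  apply Rle_trans with ((Rabs (f e) + Rabs (g e)) * (e ^ N1 * e ^ N2)); [|nra].
  apply Rmult_le_compat_r; nra.
Qed.

Lemma moderate_mul f g : moderate f -> moderate g -> moderate (fun e => f e * g e).
Proof.
  intros Hf Hg. apply moderateP in Hf as (N1 & C1 & e1 & He1 & B1).
  apply moderateP in Hg as (N2 & C2 & e2 & He2 & B2). apply moderateP.
  exists (N1 + N2)%nat, (C1 * C2), (Rmin e1 e2). split; [now apply inI_Rmin|].
  intros e He Hle. specialize (B1 e He (Rmin_le_l _ _ _ Hle)).
  specialize (B2 e He (Rmin_le_r _ _ _ Hle)).
  assert (P1 : 0 < e ^ N1) by (apply pow_lt; lra).
  assert (P2 : 0 < e ^ N2) by (apply pow_lt; lra).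
  pose proof (Rabs_pos (f e)). pose proof (Rabs_pos (g e)).
  rewrite pow_add, Rabs_mult.
  replace (Rabs (f e) * Rabs (g e) * (e ^ N1 * e ^ N2))
    with ((Rabs (f e) * e ^ N1) * (Rabs (g e) * e ^ N2)) by ring.
  apply Rmult_le_compat; auto; nra.
Qed.

Lemma negligible_of_pow_le y n k : (1 <= k)%nat -> negligible n ->
  (forall e, inI e -> Rabs (y e) ^ k <= Rabs (n e)) -> negligible y.
Proof.
  intros Hk Hn H m. destruct (Hn (m * k)%nat) as (C & eta & Heta & B).
  set (C' := Rmax 1 C + 1).
  assert (HC1 : 1 <= C') by (unfold C'; pose proof (Rmax_l 1 C); lra).
  assert (HC2 : C < C') by (unfold C'; pose proof (Rmax_r 1 C); lra).
  exists C', eta; split; auto. intros e He Hle.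
  destruct (Rle_lt_dec (Rabs (y e)) (C' * e ^ m)) as [Ok|Bad]; auto. exfalso.
  specialize (B e He Hle). specialize (H e (inI_le _ _ Heta He Hle)).
  assert (P : 0 < e ^ m) by (apply pow_lt; lra).
  assert (A1 : (C' * e ^ m) ^ k <= Rabs (y e) ^ k) by (apply pow_incr; nra).
  rewrite Rpow_mult_distr in A1.
  assert (A2 : C' <= C' ^ k).
  { destruct k as [|k]; [lia|]. simpl. assert (1 <= C' ^ k) by (apply pow_R1_Rle; lra). nra. }
  assert (P2 : 0 < (e ^ m) ^ k) by (apply pow_lt; lra).
  rewrite pow_mult in B. nra.
Qed.

Lemma geq_pointwise r s : (forall e, inI e -> r e = s e) -> geq r s.
Proof.
  intros H. apply (negligible_ext _ _ negligible_zero). intros e He. rewrite H; auto. ring.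
Qed.

Lemma geq_refl r : geq r r.
Proof. now apply geq_pointwise. Qed.

Lemma geq_sym r s : geq r s -> geq s r.
Proof.
  intros H. apply (negligible_ext _ _ (negligible_opp _ H)). intros; ring.
Qed.

Lemma geq_trans r s t : geq r s -> geq s t -> geq r t.
Proof.
  intros H1 H2. apply (negligible_ext _ _ (negligible_add _ _ H1 H2)). intros; ring.
Qed.

Lemma moderate_geq r s : moderate r -> geq r s -> moderate s.
Proof.
  intros Hr H. apply (moderate_le _ (fun e => r e + - (r e - s e))).
  - apply moderate_add; auto. now apply moderate_of_negligible, negligible_opp.
  - intros; replace (r e + - (r e - s e)) with (s e) by ring; lra.
Qed.

Lemma geq_add r r' s s' : geq r r' -> geq s s' -> geq (nadd r s) (nadd r' s').
Proof.
  intros H1 H2. apply (negligible_ext _ _ (negligible_add _ _ H1 H2)).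
  intros; unfold nadd; ring.
Qed.

Lemma geq_mul r r' s s' : moderate s -> moderate r' -> geq r r' -> geq s s' ->
  geq (nmul r s) (nmul r' s').
Proof.
  intros Hs Hr' H1 H2.
  apply (negligible_ext _ _ (negligible_add _ _ (negligible_mul_moderate _ _ H1 Hs)
                                                (negligible_mul_moderate _ _ H2 Hr'))).
  intros; unfold nmul; ring.
Qed.

Lemma geq_opp r r' : geq r r' -> geq (nopp r) (nopp r').
Proof.
  intros H. apply (negligible_ext _ _ (negligible_opp _ H)). intros; unfold nopp; ring.
Qed.

Ltac piecewise_lra :=
  unfold Rmin, Rmax, Rabs in *; repeat destruct Rle_dec; repeat destruct Rcase_abs; lra.

Lemma Rabs_Rmin_sub a b c d : Rabs (Rmin a b - Rmin c d) <= Rabs (a - c) + Rabs (b - d).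
Proof. piecewise_lra. Qed.

Lemma Rabs_Rmax_sub a b c d : Rabs (Rmax a b - Rmax c d) <= Rabs (a - c) + Rabs (b - d).
Proof. piecewise_lra. Qed.

Lemma moderate_nmin r s : moderate r -> moderate s -> moderate (nmin r s).
Proof.
  intros Hr Hs. apply (moderate_le _ _ (moderate_add _ _ (moderate_Rabs _ Hr) (moderate_Rabs _ Hs))).
  intros; unfold nmin; piecewise_lra.
Qed.

Lemma moderate_nmax r s : moderate r -> moderate s -> moderate (nmax r s).
Proof.
  intros Hr Hs. apply (moderate_le _ _ (moderate_add _ _ (moderate_Rabs _ Hr) (moderate_Rabs _ Hs))).
  intros; unfold nmax; piecewise_lra.
Qed.

Lemma npow_eq r n e : npow r n e = r e ^ n.
Proof. induction n; simpl; unfold nconst, nmul; congruence. Qed.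

Lemma geq_npow_zero r n : geq (npow r (S n)) (nconst 0) -> geq r (nconst 0).
Proof.
  intros H. apply (negligible_of_pow_le _ _ (S n) ltac:(lia) H).
  intros e _. unfold nconst. rewrite !Rminus_0_r, npow_eq, RPow_abs. lra.
Qed.

(* [t] is only approximately nonnegative: it lies above [t1 >= z ~ 0]. *)
Lemma Rmin_mul_defect a b t t1 z : z <= t1 ->
  Rabs (Rmin a b * t - Rmin (a * t) (b * t)) <= (Rabs (t - t1) + Rabs (0 - z)) * Rabs (a - b).
Proof.
  intros Hz. pose proof (Rabs_pos (a - b)). pose proof (Rabs_pos (t - t1)).
  pose proof (Rabs_pos (0 - z)).
  destruct (Rle_lt_dec 0 t) as [Ht|Ht].
  - replace (Rmin a b * t - Rmin (a * t) (b * t)) with 0.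
    + rewrite Rabs_R0. apply Rmult_le_pos; lra.
    + unfold Rmin; destruct (Rle_dec a b), (Rle_dec (a * t) (b * t)); nra.
  - replace (Rmin a b * t - Rmin (a * t) (b * t)) with (Rabs (a - b) * - t).
    + rewrite Rabs_mult, (Rabs_right (- t)), Rabs_Rabsolu, (Rmult_comm (_ + _)) by lra.
      apply Rmult_le_compat_l; [lra|]. piecewise_lra.
    + unfold Rmin; destruct (Rle_dec a b), (Rle_dec (a * t) (b * t));
        unfold Rabs; destruct Rcase_abs; nra.
Qed.

Section Generalized_ring.

Variables K Q : net -> Prop.
Hypothesis K_moderate : forall r, K r -> moderate r.
Hypothesis K_Q : forall r, K r -> Q r.
Hypothesis Q_const : forall c, Q (nconst c).
Hypothesis Q_lipschitz : forall a b h, Q a -> Q b ->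
  (forall x y, inI x -> inI y -> Rabs (h x - h y) <= Rabs (a x - a y) + Rabs (b x - b y)) ->
  Q h.

Lemma Q_add a b : Q a -> Q b -> Q (fun e => a e + b e).
Proof. intros. apply (Q_lipschitz a b); auto. intros; piecewise_lra. Qed.

Lemma Q_sub a b : Q a -> Q b -> Q (fun e => a e - b e).
Proof. intros. apply (Q_lipschitz a b); auto. intros; piecewise_lra. Qed.

Lemma Q_Rabs a : Q a -> Q (fun e => Rabs (a e)).
Proof. intros. apply (Q_lipschitz a a); auto. intros; piecewise_lra. Qed.

Lemma Q_nmin a b : Q a -> Q b -> Q (nmin a b).
Proof. intros. apply (Q_lipschitz a b); auto. intros; apply Rabs_Rmin_sub. Qed.

Lemma Q_nmax a b : Q a -> Q b -> Q (nmax a b).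
Proof. intros. apply (Q_lipschitz a b); auto. intros; apply Rabs_Rmax_sub. Qed.

Lemma nle_refl r : K r -> nle Q r r.
Proof. intros. exists r, r. repeat split; auto using geq_refl. intros; lra. Qed.

(* Lower the representative of r by the discrepancy between the two representatives of s. *)
Lemma nle_trans r s t : nle Q r s -> nle Q s t -> nle Q r t.
Proof.
  intros (r1 & s1 & Qr1 & Qs1 & Hr & Hs & H1) (s2 & t2 & Qs2 & Qt2 & Hs2 & Ht & H2).
  exists (fun e => r1 e - Rabs (s1 e - s2 e)), t2.
  repeat split; auto using Q_sub, Q_Rabs.
  - apply (negligible_ext _ _ (negligible_add _ _ Hr
            (negligible_Rabs _ (geq_trans _ _ _ (geq_sym _ _ Hs) Hs2)))).
    intros; ring.
  - intros e He. specialize (H1 e He). specialize (H2 e He). piecewise_lra.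
Qed.

Lemma nle_antisym r s : nle Q r s -> nle Q s r -> geq r s.
Proof.
  intros (r1 & s1 & _ & _ & Hr1 & Hs1 & H1) (s2 & r2 & _ & _ & Hs2 & Hr2 & H2).
  apply (negligible_le _ (fun e => (Rabs (r e - r1 e) + Rabs (s e - s1 e)) +
                                   (Rabs (r e - r2 e) + Rabs (s e - s2 e)))).
  - auto using negligible_add, negligible_Rabs.
  - intros e He. specialize (H1 e He). specialize (H2 e He). piecewise_lra.
Qed.

Lemma nle_geq r r' s s' : geq r r' -> geq s s' -> nle Q r s -> nle Q r' s'.
Proof.
  intros Hr Hs (r1 & s1 & Q1 & Q2 & H1 & H2 & H).
  exists r1, s1. repeat split; eauto using geq_trans, geq_sym.
Qed.

Lemma nle_add r s t : K t -> nle Q r s -> nle Q (nadd r t) (nadd s t).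
Proof.
  intros Kt (r1 & s1 & Q1 & Q2 & H1 & H2 & H).
  exists (nadd r1 t), (nadd s1 t).
  repeat split; try apply Q_add; try apply geq_add; auto using geq_refl.
  intros e He; specialize (H e He); unfold nadd; lra.
Qed.

Lemma geq_Rabs_of_nonneg r : nle Q (nconst 0) r -> geq r (fun e => Rabs (r e)).
Proof.
  intros (z & r1 & _ & _ & Hz & Hr & H).
  apply (negligible_le _ (fun e => (Rabs (r e - r1 e) + Rabs (r e - r1 e)) +
                                   (Rabs (nconst 0 e - z e) + Rabs (nconst 0 e - z e)))).
  - auto using negligible_add, negligible_Rabs.
  - intros e He. specialize (H e He). unfold nconst in *. piecewise_lra.
Qed.

Lemma nle_mul r s : K r -> K s -> nle Q (nconst 0) r -> nle Q (nconst 0) s ->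
  K (nmul r s) -> nle Q (nconst 0) (nmul r s).
Proof.
  intros Kr Ks Hr Hs Krs.
  exists (nconst 0), (fun e => Rabs (nmul r s e)). repeat split; auto using geq_refl, Q_Rabs.
  - apply geq_trans with (nmul (fun e => Rabs (r e)) (fun e => Rabs (s e))).
    + apply geq_mul; auto using geq_Rabs_of_nonneg, moderate_Rabs.
    + apply geq_pointwise. intros; unfold nmul; now rewrite Rabs_mult.
  - intros; unfold nconst; apply Rabs_pos.
Qed.

Lemma nmin_glb r s m : K r -> K s -> geq m (nmin r s) ->
  nle Q m r /\ nle Q m s /\ forall z, K z -> nle Q z r -> nle Q z s -> nle Q z m.
Proof.
  intros Kr Ks Hm. split; [|split].
  - exists (nmin r s), r. repeat split; auto using geq_refl, Q_nmin.
    intros; apply Rmin_l.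
  - exists (nmin r s), s. repeat split; auto using geq_refl, Q_nmin.
    intros; apply Rmin_r.
  - intros z Kz (z1 & r1 & Qz1 & Qr1 & Hz1 & Hr1 & H1) (z2 & s2 & Qz2 & Qs2 & Hz2 & Hs2 & H2).
    exists (fun e => nmin z1 z2 e - Rabs (r1 e - r e) - Rabs (s2 e - s e)), (nmin r s).
    repeat split; auto 7 using Q_nmin, Q_sub, Q_Rabs.
    + apply (negligible_le _ (fun e => (Rabs (z e - z1 e) + Rabs (z e - z2 e)) +
                                       (Rabs (r1 e - r e) + Rabs (s2 e - s e)))).
      * pose proof (geq_sym _ _ Hr1); pose proof (geq_sym _ _ Hs2).
        auto using negligible_add, negligible_Rabs.
      * intros e He. unfold nmin. piecewise_lra.
    + intros e He. specialize (H1 e He). specialize (H2 e He). unfold nmin. piecewise_lra.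
Qed.

Lemma nmax_lub r s m : K r -> K s -> geq m (nmax r s) ->
  nle Q r m /\ nle Q s m /\ forall z, K z -> nle Q r z -> nle Q s z -> nle Q m z.
Proof.
  intros Kr Ks Hm. split; [|split].
  - exists r, (nmax r s). repeat split; auto using geq_refl, Q_nmax.
    intros; apply Rmax_l.
  - exists s, (nmax r s). repeat split; auto using geq_refl, Q_nmax.
    intros; apply Rmax_r.
  - intros z Kz (r1 & z1 & Qr1 & Qz1 & Hr1 & Hz1 & H1) (s2 & z2 & Qs2 & Qz2 & Hs2 & Hz2 & H2).
    exists (nmax r s), (fun e => nmax z1 z2 e + Rabs (r1 e - r e) + Rabs (s2 e - s e)).
    repeat split; auto 7 using Q_nmax, Q_add, Q_sub, Q_Rabs.
    + apply (negligible_le _ (fun e => (Rabs (z e - z1 e) + Rabs (z e - z2 e)) +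
                                       (Rabs (r1 e - r e) + Rabs (s2 e - s e)))).
      * pose proof (geq_sym _ _ Hr1); pose proof (geq_sym _ _ Hs2).
        auto using negligible_add, negligible_Rabs.
      * intros e He. unfold nmax. piecewise_lra.
    + intros e He. specialize (H1 e He). specialize (H2 e He). unfold nmax. piecewise_lra.
Qed.

Lemma geq_nmin_mul r s t m1 m2 : K r -> K s -> K t -> nle Q (nconst 0) t ->
  geq m1 (nmin r s) -> geq m2 (nmin (nmul r t) (nmul s t)) -> geq (nmul m1 t) m2.
Proof.
  intros Kr Ks Kt (z & t1 & _ & _ & Hz & Ht & H) H1 H2.
  apply geq_trans with (nmul (nmin r s) t).
  { apply geq_mul; auto using geq_refl, moderate_nmin. }
  apply geq_trans with (nmin (nmul r t) (nmul s t)); [|now apply geq_sym].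
  apply (negligible_le _ (fun e => (Rabs (t e - t1 e) + Rabs (nconst 0 e - z e)) *
                                   Rabs (r e - s e))).
  - apply negligible_mul_moderate; [auto using negligible_add, negligible_Rabs|].
    apply moderate_Rabs, moderate_add; auto.
    apply (moderate_le _ s); auto. intros; rewrite Rabs_Ropp; lra.
  - intros e He. unfold nmul, nmin, nconst. rewrite (Rabs_right (_ * _)).
    + apply Rmin_mul_defect, H; auto.
    + apply Rle_ge, Rmult_le_pos; [|apply Rabs_pos].
      apply Rplus_le_le_0_compat; apply Rabs_pos.
Qed.

Theorem reduced_normal_fring_of_closure :
  K (nconst 0) -> K (nconst 1) ->
  (forall r s, K r -> K s -> K (nadd r s)) ->
  (forall r s, K r -> K s -> K (nmul r s)) ->
  (forall r, K r -> K (nopp r)) ->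
  (forall r s, K r -> K s -> exists m, K m /\ geq m (nmin r s)) ->
  (forall r s, K r -> K s -> exists m, K m /\ geq m (nmax r s)) ->
  (forall r s, K r -> K s -> geq (nmul r s) (nconst 0) ->
      forall x, K x -> exists a b, K a /\ K b /\
        geq (nmul r a) (nconst 0) /\ geq (nmul s b) (nconst 0) /\
        geq x (nadd a b)) ->
  reduced_normal_fring K Q.
Proof.
  intros K0 K1 Kadd Kmul Kopp Kmin Kmax Knormal.
  repeat split; auto; intros;
    try solve [apply geq_pointwise; intros; unfold nadd, nmul, nopp, nconst; ring].
  - now apply geq_sym.
  - now apply geq_trans with s.
  - now apply geq_add.
  - apply geq_mul; auto.
  - now apply geq_opp.
  - now apply nle_refl.
  - now apply nle_trans with s.
  - now apply nle_antisym.
  - now apply nle_geq with r s.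
  - now apply nle_add.
  - apply nle_mul; auto.
  - now apply (nmin_glb r s m).
  - now apply (nmin_glb r s m).
  - now apply (nmin_glb r s m).
  - now apply (nmax_lub r s m).
  - now apply (nmax_lub r s m).
  - now apply (nmax_lub r s m).
  - now apply geq_nmin_mul with r s.
  - now apply geq_npow_zero with n.
Qed.

End Generalized_ring.

Definition flat (e : R) : R := exp (- / e).

Lemma flat_pos e : 0 < flat e.
Proof. apply exp_pos. Qed.

Lemma exp_mul_INR a n : exp (INR n * a) = exp a ^ n.
Proof.
  induction n as [|n IH].
  - simpl. now rewrite Rmult_0_l, exp_0.
  - rewrite S_INR, Rmult_plus_distr_r, Rmult_1_l, exp_plus, IH. simpl. ring.
Qed.

(* exp y >= (y / M) ^ (m+1) with M = m+1 and y = 1/e gives exp (-1/e) <= M^(m+1) e^(m+1). *)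
Lemma negligible_flat : negligible flat.
Proof.
  intros m. set (M := INR (S m)).
  assert (HM : 1 <= M) by (unfold M; rewrite S_INR; pose proof (pos_INR m); lra).
  exists (M ^ S m), 1. split; [unfold inI; lra|].
  intros e He Hle. unfold flat.
  rewrite Rabs_right by (apply Rle_ge, Rlt_le, exp_pos).
  set (y := / e).
  assert (Hy : 1 <= y).
  { unfold y. rewrite <- Rinv_1. apply Rinv_le_contravar; lra. }
  assert (Hpos : 0 < y / M) by (apply Rdiv_lt_0_compat; lra).
  assert (Hexp : (y / M) ^ S m <= exp y).
  { replace (exp y) with (exp (y / M) ^ S m)
      by (rewrite <- exp_mul_INR; f_equal; fold M; field; lra).
    apply pow_incr. pose proof (exp_ineq1_le (y / M)). lra. }
  rewrite exp_Ropp.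
  apply Rle_trans with (/ ((y / M) ^ S m)); [apply Rinv_le_contravar; auto using pow_lt|].
  replace (/ ((y / M) ^ S m)) with (M ^ S m * e ^ S m)
    by (unfold y; rewrite <- Rpow_mult_distr, <- pow_inv; f_equal; field; lra).
  apply Rmult_le_compat_l; [apply pow_le; lra|].
  simpl. rewrite <- (Rmult_1_r (e ^ m)) at 2. rewrite Rmult_comm.
  apply Rmult_le_compat_l; [apply pow_le|]; lra.
Qed.

Lemma sqrt_regularization_sq d w : 0 < w -> Rabs ((sqrt (d ^ 2 + w) - Rabs d) / 2) ^ 2 <= Rabs w.
Proof.
  intros Hw. rewrite pow2_abs, (Rabs_right w) by lra.
  set (q := sqrt (d ^ 2 + w)).
  assert (Hq : 0 <= q) by apply sqrt_pos.
  assert (Hq2 : q * q = d ^ 2 + w) by (apply sqrt_sqrt; nra).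
  assert (Hd : Rabs d ^ 2 = d ^ 2) by apply pow2_abs.
  assert (Ha : 0 <= Rabs d) by apply Rabs_pos.
  assert (Hqd : Rabs d <= q) by nra.
  nra.
Qed.

(* (min, max)(r, s) = (r + s -+ |r - s|) / 2, with |r - s| replaced by sqrt ((r - s)^2 + flat). *)
Definition smooth_min (r s : net) : net :=
  fun e => (r e + s e - sqrt ((r e - s e) ^ 2 + flat e)) / 2.
Definition smooth_max (r s : net) : net :=
  fun e => (r e + s e + sqrt ((r e - s e) ^ 2 + flat e)) / 2.

Lemma geq_smooth_min r s : geq (smooth_min r s) (nmin r s).
Proof.
  apply (negligible_of_pow_le _ _ 2 ltac:(lia) negligible_flat).
  intros e _. unfold smooth_min, nmin.
  replace ((r e + s e - sqrt ((r e - s e) ^ 2 + flat e)) / 2 - Rmin (r e) (s e))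
    with (- ((sqrt ((r e - s e) ^ 2 + flat e) - Rabs (r e - s e)) / 2)) by piecewise_lra.
  rewrite Rabs_Ropp. apply sqrt_regularization_sq, flat_pos.
Qed.

Lemma geq_smooth_max r s : geq (smooth_max r s) (nmax r s).
Proof.
  apply (negligible_of_pow_le _ _ 2 ltac:(lia) negligible_flat).
  intros e _. unfold smooth_max, nmax.
  replace ((r e + s e + sqrt ((r e - s e) ^ 2 + flat e)) / 2 - Rmax (r e) (s e))
    with ((sqrt ((r e - s e) ^ 2 + flat e) - Rabs (r e - s e)) / 2) by piecewise_lra.
  apply sqrt_regularization_sq, flat_pos.
Qed.

(* x = x s^2 / D + x (r^2 + flat) / D with D = r^2 + s^2 + flat; the first part is killed by r
   and the second by s, up to negligible nets, whenever r s is negligible. *)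
Definition normal_denom (r s : net) (e : R) : R := r e ^ 2 + s e ^ 2 + flat e.
Definition normal_part_l (r s x : net) : net := fun e => x e * (s e ^ 2 / normal_denom r s e).
Definition normal_part_r (r s x : net) : net :=
  fun e => x e * ((r e ^ 2 + flat e) / normal_denom r s e).

Lemma normal_denom_pos r s e : 0 < normal_denom r s e.
Proof. unfold normal_denom. pose proof (flat_pos e). nra. Qed.

Lemma sq_div_sum_sq_le r s w : 0 < w -> Rabs (r * s ^ 2 / (r ^ 2 + s ^ 2 + w)) ^ 2 <= Rabs (r * s).
Proof.
  intros Hw. set (D := r ^ 2 + s ^ 2 + w).
  assert (HD : 0 < D) by (unfold D; nra).
  set (u := Rabs r). set (v := Rabs s).
  assert (Hu : 0 <= u) by apply Rabs_pos. assert (Hv : 0 <= v) by apply Rabs_pos.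
  assert (HuvD : u ^ 2 + v ^ 2 <= D) by (unfold u, v, D; rewrite !pow2_abs; lra).
  rewrite Rabs_div, Rabs_mult, <- RPow_abs, (Rabs_right D), Rabs_mult by lra. fold u v.
  replace ((u * v ^ 2 / D) ^ 2) with (u ^ 2 * v ^ 4 / D ^ 2) by (field; lra).
  apply (Rmult_le_reg_r (D ^ 2)); [apply pow_lt; lra|].
  replace (u ^ 2 * v ^ 4 / D ^ 2 * D ^ 2) with (u * v * (u * v ^ 3)) by (field; lra).
  assert (B1 : (u ^ 2 + v ^ 2) ^ 2 <= D ^ 2) by (apply pow_incr; nra).
  assert (B2 : u * v ^ 3 <= (u ^ 2 + v ^ 2) ^ 2) by nra.
  apply Rmult_le_compat_l; nra.
Qed.

Lemma flat_div_sum_sq_le r s w : 0 < w -> Rabs (s * w / (r ^ 2 + s ^ 2 + w)) ^ 2 <= Rabs w.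
Proof.
  intros Hw. set (D := r ^ 2 + s ^ 2 + w).
  assert (HD : 0 < D) by (unfold D; nra).
  rewrite (Rabs_right w), pow2_abs by lra.
  replace ((s * w / D) ^ 2) with (w * (s ^ 2 * w) / D ^ 2) by (field; lra).
  apply (Rmult_le_reg_r (D ^ 2)); [apply pow_lt; lra|].
  replace (w * (s ^ 2 * w) / D ^ 2 * D ^ 2) with (w * (s ^ 2 * w)) by (field; lra).
  assert (B1 : (s ^ 2 + w) ^ 2 <= D ^ 2) by (apply pow_incr; unfold D; nra).
  assert (B2 : s ^ 2 * w <= (s ^ 2 + w) ^ 2) by nra.
  apply Rmult_le_compat_l; lra.
Qed.

Lemma moderate_normal_parts r s x : moderate x ->
  moderate (normal_part_l r s x) /\ moderate (normal_part_r r s x).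
Proof.
  intros Hx. pose proof flat_pos as Hflat.
  assert (Hfrac : forall a e, 0 <= a <= normal_denom r s e ->
                    Rabs (x e * (a / normal_denom r s e)) <= Rabs (x e)).
  { intros a e Ha. pose proof (normal_denom_pos r s e) as HD. pose proof (Rabs_pos (x e)).
    rewrite Rabs_mult, (Rabs_right (a / _)) by (apply Rle_ge, Rdiv_le_0_compat; lra).
    rewrite <- (Rmult_1_r (Rabs (x e))) at 2. apply Rmult_le_compat_l; auto.
    apply (Rdiv_le_1 _ _ HD); lra. }
  split; apply (moderate_le _ x Hx); intros e _; apply Hfrac;
    unfold normal_denom; specialize (Hflat e); nra.
Qed.

Lemma normal_decomposition r s x : moderate x -> geq (nmul r s) (nconst 0) ->
  geq (nmul r (normal_part_l r s x)) (nconst 0) /\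
  geq (nmul s (normal_part_r r s x)) (nconst 0) /\
  geq x (nadd (normal_part_l r s x) (normal_part_r r s x)).
Proof.
  intros Hx Hrs.
  assert (Hn : negligible (fun e => Rabs (r e * s e))).
  { apply negligible_Rabs, (negligible_ext _ _ Hrs). intros; unfold nmul, nconst; ring. }
  pose proof (normal_denom_pos r s) as HD. unfold normal_denom in HD.
  split; [|split].
  - apply (negligible_ext _ (fun e => r e * s e ^ 2 / (r e ^ 2 + s e ^ 2 + flat e) * x e)).
    + apply negligible_mul_moderate; auto.
      apply (negligible_of_pow_le _ _ 2 ltac:(lia) Hn).
      intros e _. rewrite Rabs_Rabsolu. apply sq_div_sum_sq_le, flat_pos.
    + intros e _. unfold nmul, nconst, normal_part_l, normal_denom.
      specialize (HD e). field. lra.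
  - apply (negligible_ext _ (fun e => (s e * r e ^ 2 / (s e ^ 2 + r e ^ 2 + flat e) +
                                       s e * flat e / (r e ^ 2 + s e ^ 2 + flat e)) * x e)).
    + apply negligible_mul_moderate; auto. apply negligible_add.
      * apply (negligible_of_pow_le _ _ 2 ltac:(lia) Hn).
        intros e _. rewrite Rabs_Rabsolu, (Rmult_comm (r e)). apply sq_div_sum_sq_le, flat_pos.
      * apply (negligible_of_pow_le _ _ 2 ltac:(lia) negligible_flat).
        intros e _. apply flat_div_sum_sq_le, flat_pos.
    + intros e _. unfold nmul, nconst, normal_part_r, normal_denom. specialize (HD e).
      replace (s e ^ 2 + r e ^ 2 + flat e) with (r e ^ 2 + s e ^ 2 + flat e) by ring.
      field. lra.
  - apply geq_pointwise. intros e _. unfold nadd, normal_part_l, normal_part_r, normal_denom.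
    specialize (HD e). field. lra.
Qed.

Lemma locally_pos x : 0 < x -> locally x (fun t => 0 < t).
Proof.
  intros Hx. exists (mkposreal x Hx). intros y Hy.
  change (Rabs (y - x) < x) in Hy. apply Rabs_def2 in Hy. lra.
Qed.

Fixpoint derivable_upto (n : nat) (f : R -> R) : Prop :=
  match n with
  | O => True
  | S m => (forall x, 0 < x -> ex_derive f x) /\ derivable_upto m (Derive f)
  end.

Lemma derivable_upto_ext n f g :
  (forall x, 0 < x -> f x = g x) -> derivable_upto n f -> derivable_upto n g.
Proof.
  revert f g. induction n as [|n IH]; intros f g Hfg; simpl; auto.
  assert (Hloc : forall x, 0 < x -> locally x (fun t => f t = g t)).
  { intros x Hx. apply (filter_imp (fun t => 0 < t)); auto using locally_pos. }
  intros [Hf Hf']. split.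
  - intros x Hx. apply (ex_derive_ext_loc f); auto.
  - apply (IH (Derive f)); auto. intros x Hx. apply Derive_ext_loc; auto.
Qed.

Lemma derivable_upto_S n f : derivable_upto (S n) f -> derivable_upto n f.
Proof.
  revert f. induction n as [|n IH]; intros f [Hf Hf']; simpl; auto.
Qed.

Lemma derivable_upto_S_intro n f f' : (forall x, 0 < x -> is_derive f x (f' x)) ->
  derivable_upto n f' -> derivable_upto (S n) f.
Proof.
  intros Hf Hf'. split.
  - intros x Hx. exists (f' x). auto.
  - apply (derivable_upto_ext _ f'); auto.
    intros x Hx. symmetry. apply is_derive_unique; auto.
Qed.

Lemma derivable_upto_const n c : derivable_upto n (fun _ => c).
Proof.
  revert c. induction n as [|n IH]; intros c; [exact I|].
  apply (derivable_upto_S_intro n _ (fun _ => 0)); auto.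
  intros x _. apply (is_derive_const c).
Qed.

Lemma derivable_upto_id n : derivable_upto n (fun x => x).
Proof.
  destruct n as [|n]; [exact I|].
  apply (derivable_upto_S_intro n _ (fun _ => 1)); auto using derivable_upto_const.
  intros x _. exact (is_derive_id x).
Qed.

Lemma derivable_upto_plus n f g : derivable_upto n f -> derivable_upto n g ->
  derivable_upto n (fun x => f x + g x).
Proof.
  revert f g. induction n as [|n IH]; intros f g Hf Hg; [exact I|].
  destruct Hf as [Hf0 Hf'], Hg as [Hg0 Hg'].
  apply (derivable_upto_S_intro n _ (fun x => Derive f x + Derive g x)); auto.
  intros x Hx. apply (is_derive_plus f g); apply Derive_correct; auto.
Qed.

Lemma derivable_upto_mult n f g : derivable_upto n f -> derivable_upto n g ->
  derivable_upto n (fun x => f x * g x).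
Proof.
  revert f g. induction n as [|n IH]; intros f g Hf Hg; [exact I|].
  pose proof (derivable_upto_S _ _ Hf). pose proof (derivable_upto_S _ _ Hg).
  destruct Hf as [Hf0 Hf'], Hg as [Hg0 Hg'].
  apply (derivable_upto_S_intro n _ (fun x => Derive f x * g x + f x * Derive g x));
    auto using derivable_upto_plus.
  intros x Hx. apply (is_derive_mult f g); auto using Derive_correct, Rmult_comm.
Qed.

Lemma derivable_upto_inv n u : derivable_upto n u -> (forall x, 0 < x -> 0 < u x) ->
  derivable_upto n (fun x => / u x).
Proof.
  revert u. induction n as [|n IH]; intros u Hu Hpos; [exact I|].
  pose proof (derivable_upto_S _ _ Hu). destruct Hu as [Hu0 Hu'].
  apply (derivable_upto_S_intro n _ (fun x => (- 1 * Derive u x) * (/ u x * / u x))).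
  - intros x Hx. specialize (Hpos x Hx).
    replace (- 1 * Derive u x * (/ u x * / u x)) with (- Derive u x / u x ^ 2) by (field; lra).
    apply is_derive_inv; [apply Derive_correct|]; auto; lra.
  - apply derivable_upto_mult; auto using derivable_upto_mult, derivable_upto_const.
Qed.

Lemma derivable_upto_sqrt n h : derivable_upto n h -> (forall x, 0 < x -> 0 < h x) ->
  derivable_upto n (fun x => sqrt (h x)).
Proof.
  revert h. induction n as [|n IH]; intros h Hh Hpos; [exact I|].
  pose proof (derivable_upto_S _ _ Hh). destruct Hh as [Hh0 Hh'].
  assert (Hsqrt : forall x, 0 < x -> 0 < sqrt (h x)) by (intros; apply sqrt_lt_R0; auto).
  apply (derivable_upto_S_intro n _ (fun x => Derive h x * (/ 2 * / sqrt (h x)))).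
  - intros x Hx. specialize (Hsqrt x Hx).
    replace (Derive h x * (/ 2 * / sqrt (h x))) with (Derive h x / (2 * sqrt (h x)))
      by (field; lra).
    apply is_derive_sqrt; auto using Derive_correct.
  - apply derivable_upto_mult; auto.
    apply derivable_upto_mult; auto using derivable_upto_const, derivable_upto_inv.
Qed.

Lemma derivable_upto_exp n h : derivable_upto n h -> derivable_upto n (fun x => exp (h x)).
Proof.
  revert h. induction n as [|n IH]; intros h Hh; [exact I|].
  pose proof (derivable_upto_S _ _ Hh). destruct Hh as [Hh0 Hh'].
  apply (derivable_upto_S_intro n _ (fun x => Derive h x * exp (h x)));
    auto using derivable_upto_mult.
  intros x Hx. apply (is_derive_comp exp h); auto using Derive_correct, is_derive_exp.
Qed.

Lemma derivable_upto_Derive_n n f :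
  derivable_upto (S n) f <-> forall k, (k <= n)%nat -> forall x, 0 < x -> ex_derive (Derive_n f k) x.
Proof.
  revert f. induction n as [|n IH]; intros f; split.
  - intros [Hf _] k Hk. replace k with 0%nat by lia. exact Hf.
  - intros H. split; simpl; auto. apply (H 0%nat); auto.
  - intros [Hf Hf'] [|k] Hk x Hx; auto.
    apply (ex_derive_ext (Derive_n (Derive f) k)).
    + intros t. rewrite <- Nat.add_1_r. apply (Derive_n_comp f k 1).
    + apply (proj1 (IH (Derive f)) Hf'); auto; lia.
  - intros H. split; [apply (H 0%nat); lia|]. apply IH. intros k Hk x Hx.
    apply (ex_derive_ext (Derive_n f (S k))).
    + intros t. rewrite <- Nat.add_1_r. symmetry. apply (Derive_n_comp f k 1).
    + apply H; auto; lia.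
Qed.

Definition smooth_pos (g : R -> R) : Prop := forall n, derivable_upto n g.

Lemma smooth_netP r : smooth_net r <-> exists g, (forall e, inI e -> g e = r e) /\ smooth_pos g.
Proof.
  split; intros (g & Hg & Hsm); exists g; split; auto.
  - intros [|n]; [exact I|]. apply derivable_upto_Derive_n. intros k _. apply Hsm.
  - intros n. apply (derivable_upto_Derive_n n g); auto.
Qed.

Lemma smooth_pos_ext f g : (forall x, 0 < x -> f x = g x) -> smooth_pos f -> smooth_pos g.
Proof. intros H Hf n. apply (derivable_upto_ext n f); auto. Qed.

Lemma smooth_pos_const c : smooth_pos (fun _ => c).
Proof. intros n; apply derivable_upto_const. Qed.

Lemma smooth_pos_plus f g : smooth_pos f -> smooth_pos g -> smooth_pos (fun x => f x + g x).
Proof. intros Hf Hg n; apply derivable_upto_plus; auto. Qed.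

Lemma smooth_pos_mult f g : smooth_pos f -> smooth_pos g -> smooth_pos (fun x => f x * g x).
Proof. intros Hf Hg n; apply derivable_upto_mult; auto. Qed.

Lemma smooth_pos_inv u : smooth_pos u -> (forall x, 0 < x -> 0 < u x) ->
  smooth_pos (fun x => / u x).
Proof. intros Hu Hpos n; apply derivable_upto_inv; auto. Qed.

Lemma smooth_pos_sqrt u : smooth_pos u -> (forall x, 0 < x -> 0 < u x) ->
  smooth_pos (fun x => sqrt (u x)).
Proof. intros Hu Hpos n; apply derivable_upto_sqrt; auto. Qed.

Lemma smooth_pos_opp f : smooth_pos f -> smooth_pos (fun x => - f x).
Proof.
  intros Hf. apply (smooth_pos_ext (fun x => -1 * f x)); [intros; ring|].
  apply smooth_pos_mult; auto using smooth_pos_const.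
Qed.

Lemma smooth_pos_minus f g : smooth_pos f -> smooth_pos g -> smooth_pos (fun x => f x - g x).
Proof. intros Hf Hg. apply (smooth_pos_plus f (fun x => - g x)); auto using smooth_pos_opp. Qed.

Lemma smooth_pos_sq f : smooth_pos f -> smooth_pos (fun x => f x ^ 2).
Proof.
  intros Hf. apply (smooth_pos_ext (fun x => f x * f x)); [intros; ring|].
  now apply smooth_pos_mult.
Qed.

Lemma smooth_pos_flat : smooth_pos flat.
Proof.
  intros n. apply derivable_upto_exp, (smooth_pos_opp (fun x => / x)).
  apply smooth_pos_inv; auto. intros m. apply derivable_upto_id.
Qed.

Lemma smooth_pos_inv_sum_sq_flat f g : smooth_pos f -> smooth_pos g ->
  smooth_pos (fun x => / (f x ^ 2 + g x ^ 2 + flat x)).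
Proof.
  intros Hf Hg. apply smooth_pos_inv.
  - auto using smooth_pos_plus, smooth_pos_sq, smooth_pos_flat.
  - intros x _. pose proof (flat_pos x). pose proof (pow2_ge_0 (f x)).
    pose proof (pow2_ge_0 (g x)). lra.
Qed.

Lemma smooth_net_map2 (F : R -> R -> R -> R) r s :
  (forall g1 g2, smooth_pos g1 -> smooth_pos g2 -> smooth_pos (fun x => F (g1 x) (g2 x) x)) ->
  smooth_net r -> smooth_net s -> smooth_net (fun e => F (r e) (s e) e).
Proof.
  intros HF (g1 & E1 & S1)%smooth_netP (g2 & E2 & S2)%smooth_netP.
  apply smooth_netP. exists (fun x => F (g1 x) (g2 x) x). split; auto.
  intros e He. now rewrite E1, E2.
Qed.

Lemma K_sm_const c : K_sm (nconst c).
Proof.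
  split; [|apply moderate_const].
  apply smooth_netP. exists (fun _ => c). split; auto using smooth_pos_const.
Qed.

Lemma K_sm_add r s : K_sm r -> K_sm s -> K_sm (nadd r s).
Proof.
  intros [Sr Mr] [Ss Ms]. split; [|now apply moderate_add].
  apply (smooth_net_map2 (fun a b _ => a + b)); auto using smooth_pos_plus.
Qed.

Lemma K_sm_mul r s : K_sm r -> K_sm s -> K_sm (nmul r s).
Proof.
  intros [Sr Mr] [Ss Ms]. split; [|now apply moderate_mul].
  apply (smooth_net_map2 (fun a b _ => a * b)); auto using smooth_pos_mult.
Qed.

Lemma K_sm_opp r : K_sm r -> K_sm (nopp r).
Proof.
  intros [Sr Mr]. split.
  - apply (smooth_net_map2 (fun a _ _ => - a) r r); auto using smooth_pos_opp.
  - apply (moderate_le _ r); auto. intros; unfold nopp; rewrite Rabs_Ropp; lra.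
Qed.

Lemma K_sm_smooth_min r s : K_sm r -> K_sm s -> K_sm (smooth_min r s).
Proof.
  intros [Sr Mr] [Ss Ms]. split.
  - apply (smooth_net_map2 (fun a b x => (a + b - sqrt ((a - b) ^ 2 + flat x)) / 2)); auto.
    intros g1 g2 S1 S2. unfold Rdiv.
    apply smooth_pos_mult; auto using smooth_pos_const.
    apply smooth_pos_minus; auto using smooth_pos_plus.
    apply smooth_pos_sqrt; auto using smooth_pos_plus, smooth_pos_sq, smooth_pos_minus, smooth_pos_flat.
    intros x _. pose proof (flat_pos x). pose proof (pow2_ge_0 (g1 x - g2 x)). lra.
  - apply (moderate_geq (nmin r s)); auto using moderate_nmin, geq_sym, geq_smooth_min.
Qed.

Lemma K_sm_smooth_max r s : K_sm r -> K_sm s -> K_sm (smooth_max r s).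
Proof.
  intros [Sr Mr] [Ss Ms]. split.
  - apply (smooth_net_map2 (fun a b x => (a + b + sqrt ((a - b) ^ 2 + flat x)) / 2)); auto.
    intros g1 g2 S1 S2. unfold Rdiv.
    apply smooth_pos_mult; auto using smooth_pos_const.
    apply smooth_pos_plus; auto using smooth_pos_plus.
    apply smooth_pos_sqrt; auto using smooth_pos_plus, smooth_pos_sq, smooth_pos_minus, smooth_pos_flat.
    intros x _. pose proof (flat_pos x). pose proof (pow2_ge_0 (g1 x - g2 x)). lra.
  - apply (moderate_geq (nmax r s)); auto using moderate_nmax, geq_sym, geq_smooth_max.
Qed.

Lemma K_sm_normal_parts r s x : K_sm r -> K_sm s -> K_sm x ->
  K_sm (normal_part_l r s x) /\ K_sm (normal_part_r r s x).
Proof.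
  intros [Sr _] [Ss _] [Sx Mx].
  destruct (moderate_normal_parts r s x Mx) as [Ml Mr].
  split; split; auto.
  - apply (smooth_net_map2 (fun a b _ => a * b) x (fun e => s e ^ 2 / normal_denom r s e));
      auto using smooth_pos_mult.
    apply (smooth_net_map2 (fun a b x => b ^ 2 / (a ^ 2 + b ^ 2 + flat x))); auto.
    intros g1 g2 S1 S2. apply smooth_pos_mult; auto using smooth_pos_sq, smooth_pos_inv_sum_sq_flat.
  - apply (smooth_net_map2 (fun a b _ => a * b) x
             (fun e => (r e ^ 2 + flat e) / normal_denom r s e)); auto using smooth_pos_mult.
    apply (smooth_net_map2 (fun a b x => (a ^ 2 + flat x) / (a ^ 2 + b ^ 2 + flat x))); auto.
    intros g1 g2 S1 S2.
    apply smooth_pos_mult; auto using smooth_pos_plus, smooth_pos_sq, smooth_pos_flat,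
      smooth_pos_inv_sum_sq_flat.
Qed.

Lemma cont_net_const c : cont_net (nconst c).
Proof.
  intros e _ eps Heps. exists 1. split; [lra|]. intros. unfold nconst.
  rewrite Rminus_eq_0, Rabs_R0; auto.
Qed.

Lemma cont_net_lipschitz a b h : cont_net a -> cont_net b ->
  (forall x y, inI x -> inI y -> Rabs (h x - h y) <= Rabs (a x - a y) + Rabs (b x - b y)) ->
  cont_net h.
Proof.
  intros Ha Hb H e He eps Heps.
  destruct (Ha e He (eps / 2) ltac:(lra)) as (d1 & Hd1 & B1).
  destruct (Hb e He (eps / 2) ltac:(lra)) as (d2 & Hd2 & B2).
  exists (Rmin d1 d2). split; [now apply Rmin_glb_lt|].
  intros x Hx Hxe.
  specialize (B1 x Hx (Rlt_le_trans _ _ _ Hxe (Rmin_l _ _))).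
  specialize (B2 x Hx (Rlt_le_trans _ _ _ Hxe (Rmin_r _ _))).
  specialize (H x e Hx He). lra.
Qed.

Lemma cont_net_of_smooth_net r : smooth_net r -> cont_net r.
Proof.
  intros (g & Hg & Hsm)%smooth_netP e He eps Heps.
  assert (Hd : ex_derive g e) by (apply (Hsm 1%nat); destruct He; lra).
  destruct (ex_derive_continuous g e Hd (ball (g e) (mkposreal eps Heps)) (locally_ball _ _))
    as [d Hd'].
  exists d. split; [apply cond_pos|]. intros x Hx Hxe.
  rewrite <- (Hg x Hx), <- (Hg e He). exact (Hd' x Hxe).
Qed.

Theorem reduced_normal_fring_full : reduced_normal_fring K_full Q_all.
Proof.
  apply reduced_normal_fring_of_closure; unfold K_full, Q_all; auto.
  - apply moderate_const.
  - apply moderate_const.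
  - intros; now apply moderate_add.
  - intros; now apply moderate_mul.
  - intros r Hr. apply (moderate_le _ r Hr). intros; unfold nopp; rewrite Rabs_Ropp; lra.
  - intros r s Hr Hs. exists (smooth_min r s).
    split; [apply (moderate_geq (nmin r s))|]; auto using moderate_nmin, geq_sym, geq_smooth_min.
  - intros r s Hr Hs. exists (smooth_max r s).
    split; [apply (moderate_geq (nmax r s))|]; auto using moderate_nmax, geq_sym, geq_smooth_max.
  - intros r s Hr Hs Hrs x Hx. exists (normal_part_l r s x), (normal_part_r r s x).
    pose proof (moderate_normal_parts r s x Hx). pose proof (normal_decomposition r s x Hx Hrs).
    tauto.
Qed.

Theorem reduced_normal_fring_sm : reduced_normal_fring K_sm cont_net.
Proof.
  apply reduced_normal_fring_of_closure.
  - now intros r [_ Hr].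
  - intros r [Hr _]. now apply cont_net_of_smooth_net.
  - apply cont_net_const.
  - apply cont_net_lipschitz.
  - apply K_sm_const.
  - apply K_sm_const.
  - apply K_sm_add.
  - apply K_sm_mul.
  - apply K_sm_opp.
  - intros r s Hr Hs. exists (smooth_min r s). split; auto using K_sm_smooth_min, geq_smooth_min.
  - intros r s Hr Hs. exists (smooth_max r s). split; auto using K_sm_smooth_max, geq_smooth_max.
  - intros r s Hr Hs Hrs x Hx. exists (normal_part_l r s x), (normal_part_r r s x).
    pose proof (K_sm_normal_parts r s x Hr Hs Hx).
    pose proof (normal_decomposition r s x (proj2 Hx) Hrs). tauto.
Qed.

Theorem corollary4p21 :
  reduced_normal_fring K_full Q_all /\ reduced_normal_fring K_sm cont_net.
Proof. split; [exact reduced_normal_fring_full | exact reduced_normal_fring_sm]. Qed.
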